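(* Under the Local Regularity Assumption (see context), let $L:=\sup\{\|\zeta\|:\zeta\in\partial f(x),\,x\in\mathcal{X}\cap B_\epsilon(\bar x)\}$, assumed finite and positive, and $\tau:=\mu/L$, and suppose $\tau\le1/\sqrt2$. Define $\gamma=\frac{\epsilon\rho}{4L+\epsilon\rho}$, $\lambda=\frac{\gamma\mu^2}{\rho L}$, and $q=\sqrt{1-(1-\gamma)\tau^2}$. Let $x_0\in B_{\epsilon/4}(\bar x)\cap\mathcal{X}$ satisfy $\mathrm{dist}(x_0,\mathcal{X}^* )\le\gamma\mu/\rho$. Then the iterates of the geometrically decaying subgradient method with parameters $\lambda,q$ started at $x_0$ all lie in $B_\epsilon(\bar x)$ and satisfy $$\mathrm{dist}^2(x_k,\mathcal{X}^* )\le\frac{\gamma^2\mu^2}{\rho^2}\big(1-(1-\gamma)\tau^2\big)^k\quad\text{for all }k\ge0.$$ Moreover, the iterates converge to some $x_\infty\in\mathcal{X}^*$ with $\|x_k-x_\infty\|\le\frac{\lambda}{1-q}q^k$ for all $k\ge0$.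
   Context: $\mathbf{E}$ is a Euclidean space with norm $\|\cdot\|$; $B_\epsilon(z)$ is the closed ball of radius $\epsilon$ about $z$; $\mathrm{proj}_{\mathcal{X}}$ is the Euclidean projection. For $f\colon\mathbf{E}\to\mathbb{R}$, $\partial f(x)$ is the (Fréchet) subdifferential: the set of $\xi$ with $f(y)\ge f(x)+\langle\xi,y-x\rangle+o(\|y-x\|)$ as $y\to x$. Local Regularity Assumption: $\mathcal{X}\subset\mathbf{E}$ is nonempty closed convex, $f\colon\mathbf{E}\to\mathbb{R}$ is continuous, $\mathcal{X}^*:=\operatorname{argmin}_{x\in\mathcal{X}}f$ is nonempty, $\bar x\in\mathcal{X}^*$, and $\epsilon,\mu,\rho>0$ satisfy: (local weak convexity) $f(y)\ge f(x)+\langle\zeta,y-x\rangle-\frac\rho2\|y-x\|^2$ for all $x,y\in\mathcal{X}\cap B_\epsilon(\bar x)$ and $\zeta\in\partial f(x)$; (local sharpness) $f(x)-\inf_{\mathcal{X}}f\ge\mu\,\mathrm{dist}(x,\mathcal{X}^* )$ for all $x\in\mathcal{X}\cap B_\epsilon(\bar x)$. Geometrically decaying subgradient method with parameters $\lambda>0$, $q\in(0,1)$: given $x_k$, choose $\zeta_k\in\partial f(x_k)$; if $\zeta_k=0$ set $x_{k+1}=x_k$, otherwise $x_{k+1}=\mathrm{proj}_{\mathcal{X}}\big(x_k-\lambda q^k\frac{\zeta_k}{\|\zeta_k\|}\big)$. *)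

(* classical reals. The Euclidean space E is modelled as R^n
   (every Euclidean space is isometric to some R^n), with vectors as nested pairs. *)
From Stdlib Require Import Reals Lra Classical ClassicalEpsilon.
Open Scope R_scope.

Fixpoint vec (n : nat) : Type :=
  match n with O => unit | S m => (R * vec m)%type end.

Fixpoint vzero (n : nat) : vec n :=
  match n with O => tt | S m => (0, vzero m) end.

Fixpoint vadd (n : nat) : vec n -> vec n -> vec n :=
  match n with
  | O => fun _ _ => tt
  | S m => fun u v => (fst u + fst v, vadd m (snd u) (snd v))
  end.

Fixpoint vscale (n : nat) (a : R) : vec n -> vec n :=
  match n with
  | O => fun _ => tt
  | S m => fun u => (a * fst u, vscale m a (snd u))
  end.

Definition vsub (n : nat) (u v : vec n) : vec n := vadd n u (vscale n (-1) v).

Fixpoint inner (n : nat) : vec n -> vec n -> R :=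
  match n with
  | O => fun _ _ => 0
  | S m => fun u v => fst u * fst v + inner m (snd u) (snd v)
  end.

Definition norm (n : nat) (u : vec n) : R := sqrt (inner n u u).

Definition ball (n : nat) (z : vec n) (eps : R) (x : vec n) : Prop :=
  norm n (vsub n x z) <= eps.

Definition convex (n : nat) (X : vec n -> Prop) : Prop :=
  forall x y t, X x -> X y -> 0 <= t <= 1 ->
    X (vadd n (vscale n t x) (vscale n (1 - t) y)).

(* sequentially closed = closed in R^n *)
Definition closed (n : nat) (X : vec n -> Prop) : Prop :=
  forall (u : nat -> vec n) (x : vec n),
    (forall k, X (u k)) -> Un_cv (fun k => norm n (vsub n (u k) x)) 0 -> X x.

Definition continuous_fun (n : nat) (f : vec n -> R) : Prop :=
  forall x eps, 0 < eps -> exists delta, 0 < delta /\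
    forall y, norm n (vsub n y x) < delta -> Rabs (f y - f x) < eps.

Definition frechet_subdiff (n : nat) (f : vec n -> R) (x xi : vec n) : Prop :=
  forall eps, 0 < eps -> exists delta, 0 < delta /\
    forall y, norm n (vsub n y x) <= delta ->
      f y >= f x + inner n xi (vsub n y x) - eps * norm n (vsub n y x).

Definition argmin_on (n : nat) (f : vec n -> R) (X : vec n -> Prop) (x : vec n) : Prop :=
  X x /\ forall y, X y -> f x <= f y.

Definition is_glb (A : R -> Prop) (m : R) : Prop :=
  (forall a, A a -> m <= a) /\ (forall b, (forall a, A a -> b <= a) -> b <= m).

(* infimum of a set of reals (0 if it has no greatest lower bound) *)
Definition Rinf (A : R -> Prop) : R :=
  match excluded_middle_informative (exists m, is_glb A m) with
  | left H => proj1_sig (constructive_indefinite_description _ H)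
  | right _ => 0
  end.

Definition distS (n : nat) (x : vec n) (S : vec n -> Prop) : R :=
  Rinf (fun d => exists y, S y /\ d = norm n (vsub n x y)).

Definition is_proj (n : nat) (X : vec n -> Prop) (y p : vec n) : Prop :=
  X p /\ forall z, X z -> norm n (vsub n y p) <= norm n (vsub n y z).

Definition gd_subgrad_run (n : nat) (f : vec n -> R) (X : vec n -> Prop)
    (lam q : R) (x zeta : nat -> vec n) : Prop :=
  forall k, frechet_subdiff n f (x k) (zeta k) /\
    (zeta k = vzero n -> x (S k) = x k) /\
    (zeta k <> vzero n ->
       is_proj n X
         (vsub n (x k) (vscale n (lam * q ^ k / norm n (zeta k)) (zeta k)))
         (x (S k))).

(* Write d_k = dist(x_k, Xstar).  One normalized step of length alpha
   from a point near xbar moves by at most alpha (the projection is nonexpansive)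
   and, by weak convexity tested against a nearly nearest solution plus sharpness,
   satisfies d_{k+1}^2 <= d_k^2 - 2 (alpha/L)(mu d_k - rho/2 d_k^2) + alpha^2.
   With alpha = lam q^k and d_k <= R0 q^k (R0 = gamma mu / rho) this scalar
   recursion yields d_{k+1} <= R0 q^{k+1}; the total path length lam/(1 - q) is
   at most eps/2, so the iterates never leave the region where the assumptions
   hold.  Steps of length lam q^k make the sequence Cauchy, its limit is in X
   (closedness) and at distance 0 from Xstar, hence a solution by continuity. *)

From Stdlib Require Import Reals Lra Lia Arith Classical ClassicalEpsilon.
Open Scope R_scope.

Lemma cauchy_schwarz_step a b S A B :
  0 <= A -> 0 <= B -> S ^ 2 <= A * B -> (a * b + S) ^ 2 <= (a ^ 2 + A) * (b ^ 2 + B).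
Proof.
intros HA HB HS.
assert (Hcross : (2 * a * b * S) ^ 2 <= (a ^ 2 * B + b ^ 2 * A) ^ 2).
{ assert (0 <= a ^ 2 * b ^ 2) by (apply Rmult_le_pos; apply pow2_ge_0).
  assert (4 * (a ^ 2 * b ^ 2) * S ^ 2 <= 4 * (a ^ 2 * b ^ 2) * (A * B))
    by (apply Rmult_le_compat_l; nra).
  pose proof (pow2_ge_0 (a ^ 2 * B - b ^ 2 * A)). nra. }
assert (0 <= a ^ 2 * B + b ^ 2 * A) by nra.
assert (2 * a * b * S <= a ^ 2 * B + b ^ 2 * A) by nra.
nra.
Qed.

Lemma inner_self_nonneg n (u : vec n) : 0 <= inner n u u.
Proof. induction n; simpl; [lra|]. pose proof (IHn (snd u)). nra. Qed.

Lemma inner_self_eq0 n (u : vec n) : inner n u u = 0 -> u = vzero n.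
Proof.
induction n as [|n IHn]; simpl; [now destruct u|].
destruct u as [a u]; simpl; intros H. pose proof (inner_self_nonneg n u).
assert (a = 0) by nra. assert (inner n u u = 0) by nra. subst. f_equal. auto.
Qed.

Lemma inner_vzero_l n (v : vec n) : inner n (vzero n) v = 0.
Proof. induction n; simpl; [reflexivity|]. rewrite IHn; ring. Qed.

Lemma cauchy_schwarz_sq n (u v : vec n) : inner n u v ^ 2 <= inner n u u * inner n v v.
Proof.
induction n as [|n IHn]; simpl; [lra|].
replace ((fst u * fst u + inner n (snd u) (snd u)) * (fst v * fst v + inner n (snd v) (snd v)))
  with ((fst u ^ 2 + inner n (snd u) (snd u)) * (fst v ^ 2 + inner n (snd v) (snd v))) by ring.
apply cauchy_schwarz_step; auto using inner_self_nonneg.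
Qed.

Lemma sqdist_sym n (a b : vec n) :
  inner n (vsub n a b) (vsub n a b) = inner n (vsub n b a) (vsub n b a).
Proof. unfold vsub; induction n; simpl; [ring|]. rewrite IHn; ring. Qed.

Lemma inner_sub_swap n (w a b : vec n) : inner n w (vsub n a b) = - inner n w (vsub n b a).
Proof. unfold vsub; induction n; simpl; [ring|]. rewrite IHn; ring. Qed.

Lemma sqdist_self n (a : vec n) : inner n (vsub n a a) (vsub n a a) = 0.
Proof. unfold vsub; induction n; simpl; [ring|]. rewrite IHn; ring. Qed.

Lemma inner_sub_self n (w a : vec n) : inner n w (vsub n a a) = 0.
Proof. unfold vsub; induction n; simpl; [ring|]. rewrite IHn; ring. Qed.

Lemma sqdist_split n (a b c : vec n) :
  inner n (vsub n a c) (vsub n a c) =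
  inner n (vsub n a b) (vsub n a b) + 2 * inner n (vsub n a b) (vsub n b c)
  + inner n (vsub n b c) (vsub n b c).
Proof. unfold vsub; induction n; simpl; [ring|]. rewrite (IHn _ (snd b)); ring. Qed.

Lemma sqdist_step n (a b w : vec n) s :
  inner n (vsub n (vsub n a (vscale n s w)) b) (vsub n (vsub n a (vscale n s w)) b)
  = inner n (vsub n a b) (vsub n a b) - 2 * s * inner n w (vsub n a b) + s ^ 2 * inner n w w.
Proof. unfold vsub; induction n; simpl; [ring|]. rewrite IHn; ring. Qed.

Lemma sqdist_convex_comb n (z y p : vec n) t :
  inner n (vsub n z (vadd n (vscale n t y) (vscale n (1 - t) p)))
          (vsub n z (vadd n (vscale n t y) (vscale n (1 - t) p)))
  = inner n (vsub n z p) (vsub n z p) - 2 * t * inner n (vsub n z p) (vsub n y p)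
    + t ^ 2 * inner n (vsub n y p) (vsub n y p).
Proof. unfold vsub; induction n; simpl; [ring|]. rewrite IHn; ring. Qed.

Lemma norm_nonneg n (u : vec n) : 0 <= norm n u.
Proof. apply sqrt_pos. Qed.

Lemma norm_sq n (u : vec n) : norm n u ^ 2 = inner n u u.
Proof. unfold norm. rewrite <- Rsqr_pow2. apply Rsqr_sqrt, inner_self_nonneg. Qed.

Lemma norm_sub_sym n (a b : vec n) : norm n (vsub n a b) = norm n (vsub n b a).
Proof. unfold norm. now rewrite sqdist_sym. Qed.

Lemma norm_sub_self n (a : vec n) : norm n (vsub n a a) = 0.
Proof. unfold norm. rewrite sqdist_self. apply sqrt_0. Qed.

Lemma norm_pos n (u : vec n) : u <> vzero n -> 0 < norm n u.
Proof.
intros Hu. destruct (Req_dec (norm n u) 0) as [E|E].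
- exfalso. apply Hu, inner_self_eq0. rewrite <- norm_sq, E. ring.
- pose proof (norm_nonneg n u). lra.
Qed.

Lemma cauchy_schwarz n (u v : vec n) : inner n u v <= norm n u * norm n v.
Proof.
pose proof (cauchy_schwarz_sq n u v) as H. rewrite <- !norm_sq in H.
pose proof (norm_nonneg n u). pose proof (norm_nonneg n v).
assert (0 <= norm n u * norm n v) by nra.
destruct (Rle_dec (inner n u v) 0); nra.
Qed.

Lemma triangle n (a b c : vec n) :
  norm n (vsub n a c) <= norm n (vsub n a b) + norm n (vsub n b c).
Proof.
pose proof (norm_nonneg n (vsub n a b)). pose proof (norm_nonneg n (vsub n b c)).
pose proof (norm_nonneg n (vsub n a c)).
assert (norm n (vsub n a c) ^ 2 <= (norm n (vsub n a b) + norm n (vsub n b c)) ^ 2).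
{ rewrite norm_sq, (sqdist_split n a b c), <- !norm_sq.
  pose proof (cauchy_schwarz n (vsub n a b) (vsub n b c)). nra. }
nra.
Qed.

Lemma sq_le_of_norm_le n (a b : vec n) : norm n a <= norm n b -> inner n a a <= inner n b b.
Proof. intros H. rewrite <- !norm_sq. pose proof (norm_nonneg n a). nra. Qed.

Lemma proj_obtuse n (X : vec n -> Prop) z p y :
  convex n X -> is_proj n X z p -> X y -> inner n (vsub n z p) (vsub n y p) <= 0.
Proof.
intros Hcv [Hp Hmin] Hy.
set (c := inner n (vsub n z p) (vsub n y p)).
set (P := inner n (vsub n y p) (vsub n y p)).
assert (HP : 0 <= P) by apply inner_self_nonneg.
destruct (Rle_dec c 0) as [|Hc]; [assumption|]. exfalso.
(* moving from p towards y by the step t = c/(P + c) would strictly decrease |z - .| *)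
set (t := c / (P + c)).
assert (Ht0 : 0 < t) by (apply Rdiv_lt_0_compat; lra).
assert (HtP : t * (P + c) = c) by (unfold t; field; lra).
assert (Ht1 : t <= 1) by nra.
pose proof (sq_le_of_norm_le n _ _ (Hmin _ (Hcv y p t Hy Hp ltac:(lra)))) as Hle.
rewrite sqdist_convex_comb in Hle. fold c P in Hle.
assert (2 * c <= t * P) by nra.
nra.
Qed.

Lemma proj_nonexpansive n (X : vec n -> Prop) z p y :
  convex n X -> is_proj n X z p -> X y ->
  inner n (vsub n p y) (vsub n p y) <= inner n (vsub n z y) (vsub n z y).
Proof.
intros Hcv Hproj Hy.
pose proof (proj_obtuse n X z p y Hcv Hproj Hy).
rewrite (sqdist_split n z p y), (inner_sub_swap n (vsub n z p) p y).
pose proof (inner_self_nonneg n (vsub n z p)). lra.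
Qed.

Lemma projected_step_length n (X : vec n -> Prop) x w s p :
  convex n X -> X x -> 0 <= s -> is_proj n X (vsub n x (vscale n s w)) p ->
  norm n (vsub n p x) <= s * norm n w.
Proof.
intros Hcv Hx Hs Hproj.
pose proof (proj_nonexpansive n X _ p x Hcv Hproj Hx) as H.
rewrite sqdist_step, sqdist_self, inner_sub_self, <- !norm_sq in H.
assert (0 <= s * norm n w) by (apply Rmult_le_pos; auto using norm_nonneg).
pose proof (norm_nonneg n (vsub n p x)). nra.
Qed.

Lemma norm_head_le m (w : vec (S m)) : Rabs (fst w) <= norm (S m) w.
Proof.
unfold norm; simpl. rewrite <- sqrt_Rsqr_abs. apply sqrt_le_1_alt.
unfold Rsqr. pose proof (inner_self_nonneg m (snd w)). lra.
Qed.

Lemma norm_tail_le m (w : vec (S m)) : norm m (snd w) <= norm (S m) w.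
Proof. unfold norm; simpl. apply sqrt_le_1_alt. nra. Qed.

Lemma norm_le_head_tail m (w : vec (S m)) : norm (S m) w <= Rabs (fst w) + norm m (snd w).
Proof.
pose proof (norm_nonneg m (snd w)). pose proof (Rabs_pos (fst w)).
pose proof (norm_nonneg _ w).
assert (norm (S m) w ^ 2 <= (Rabs (fst w) + norm m (snd w)) ^ 2).
{ rewrite norm_sq. simpl inner. rewrite <- norm_sq.
  replace (fst w * fst w) with (Rabs (fst w) ^ 2)
    by (rewrite <- Rsqr_pow2, <- Rsqr_abs; reflexivity).
  nra. }
nra.
Qed.

Definition vcauchy n (u : nat -> vec n) : Prop :=
  forall e, 0 < e -> exists N, forall i j, (N <= i)%nat -> (N <= j)%nat ->
    norm n (vsub n (u i) (u j)) < e.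

Lemma vcauchy_converges n (u : nat -> vec n) : vcauchy n u ->
  exists l, Un_cv (fun k => norm n (vsub n (u k) l)) 0.
Proof.
revert u. induction n as [|n IHn]; intros u Hu.
- exists tt. intros e He. exists O. intros. unfold norm; simpl. rewrite sqrt_0, Rdist_eq. lra.
- assert (Hhead : Cauchy_crit (fun k => fst (u k))).
  { intros e He. destruct (Hu e He) as [N HN]. exists N. intros i j Hi Hj.
    eapply Rle_lt_trans; [|apply (HN i j Hi Hj)].
    eapply Rle_trans; [|apply norm_head_le]. simpl. unfold Rdist. right. f_equal. ring. }
  destruct (R_complete _ Hhead) as [a Ha].
  assert (Htail : vcauchy n (fun k => snd (u k))).
  { intros e He. destruct (Hu e He) as [N HN]. exists N. intros i j Hi Hj.
    eapply Rle_lt_trans; [|apply (HN i j Hi Hj)]. apply (norm_tail_le n (vsub (S n) (u i) (u j))). }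
  destruct (IHn _ Htail) as [l Hl].
  exists (a, l). intros e He.
  destruct (Ha (e / 2) ltac:(lra)) as [N1 HN1]. destruct (Hl (e / 2) ltac:(lra)) as [N2 HN2].
  exists (Nat.max N1 N2). intros k Hk.
  specialize (HN1 k ltac:(lia)). specialize (HN2 k ltac:(lia)).
  unfold Rdist in *. rewrite Rminus_0_r in *. rewrite Rabs_pos_eq in * by apply norm_nonneg.
  eapply Rle_lt_trans; [apply norm_le_head_tail|]. simpl.
  replace (fst (u k) + -1 * a) with (fst (u k) - a) by ring. unfold vsub in HN2. lra.
Qed.

Lemma le_of_le_plus_small (A B C d0 : R) :
  0 < d0 -> (forall d, 0 < d <= d0 -> A <= B + d * C) -> A <= B.
Proof.
intros Hd0 H. destruct (Rle_dec A B) as [|Hn]; [assumption|]. exfalso.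
set (d := Rmin d0 ((A - B) / (2 * (Rabs C + 1)))).
pose proof (Rabs_pos C).
assert (Hp : 0 < (A - B) / (2 * (Rabs C + 1))) by (apply Rdiv_lt_0_compat; lra).
assert (Hd : 0 < d <= d0) by (split; [apply Rmin_glb_lt; lra | apply Rmin_l]).
specialize (H d Hd).
assert (d * C <= d * Rabs C) by (apply Rmult_le_compat_l; [lra|apply Rle_abs]).
assert (d * (Rabs C + 1) <= (A - B) / 2).
{ replace ((A - B) / 2) with ((A - B) / (2 * (Rabs C + 1)) * (Rabs C + 1)) by (field; lra).
  apply Rmult_le_compat_r; [lra | apply Rmin_r]. }
nra.
Qed.

Lemma Rinf_is_glb (A : R -> Prop) m : is_glb A m -> Rinf A = m.
Proof.
intros Hm. unfold Rinf. destruct (excluded_middle_informative _) as [e|ne].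
- destruct (constructive_indefinite_description _ e) as [m' Hm']. simpl.
  destruct Hm as [H1 H2], Hm' as [H1' H2']. apply Rle_antisym; auto.
- exfalso. apply ne. eauto.
Qed.

Lemma distS_glb n (x : vec n) (S : vec n -> Prop) : (exists y, S y) ->
  is_glb (fun d => exists y, S y /\ d = norm n (vsub n x y)) (distS n x S).
Proof.
intros [y0 Hy0].
set (E := fun r => exists y, S y /\ - r = norm n (vsub n x y)).
assert (Hb : bound E).
{ exists 0. intros r [y [_ Hr]]. pose proof (norm_nonneg n (vsub n x y)). lra. }
assert (Hne : exists r, E r) by (exists (- norm n (vsub n x y0)), y0; split; auto; ring).
destruct (completeness E Hb Hne) as [m [Hm1 Hm2]].
assert (G : is_glb (fun d => exists y, S y /\ d = norm n (vsub n x y)) (- m)).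
{ split.
  - intros a [y [Hy ->]].
    assert (E (- norm n (vsub n x y))) as HE by (exists y; split; auto; ring).
    specialize (Hm1 _ HE). lra.
  - intros b Hb'. assert (m <= - b); [|lra].
    apply Hm2. intros r [y [Hy Hr]]. specialize (Hb' (- r) (ex_intro _ y (conj Hy Hr))). lra. }
unfold distS. rewrite (Rinf_is_glb _ _ G). exact G.
Qed.

Lemma distS_nonneg n x (S : vec n -> Prop) : (exists y, S y) -> 0 <= distS n x S.
Proof.
intros H. destruct (distS_glb n x S H) as [_ H2]. apply H2.
intros a [y [_ ->]]. apply norm_nonneg.
Qed.

Lemma distS_le n x (S : vec n -> Prop) y : S y -> distS n x S <= norm n (vsub n x y).
Proof. intros H. destruct (distS_glb n x S (ex_intro _ y H)) as [H1 _]. apply H1. eauto. Qed.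

Lemma distS_approx n x (S : vec n -> Prop) e : (exists y, S y) -> 0 < e ->
  exists y, S y /\ norm n (vsub n x y) < distS n x S + e.
Proof.
intros Hne He. destruct (distS_glb n x S Hne) as [H1 H2].
apply NNPP. intros Hn.
assert (distS n x S + e <= distS n x S); [|lra].
apply H2. intros a [y [Hy ->]]. apply Rnot_lt_le. intros Hl. apply Hn. eauto.
Qed.

Lemma distS_lipschitz n x z (S : vec n -> Prop) : (exists y, S y) ->
  distS n x S <= norm n (vsub n x z) + distS n z S.
Proof.
intros Hne. apply (le_of_le_plus_small _ _ 1 1 ltac:(lra)). intros e [He _].
destruct (distS_approx n z S e Hne He) as [y [Hy Hyz]].
pose proof (distS_le n x S y Hy). pose proof (triangle n x z y). lra.
Qed.

Lemma pow_eventually_small q e : 0 <= q < 1 -> 0 < e ->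
  exists N, forall k, (N <= k)%nat -> q ^ k < e.
Proof.
intros Hq He. destruct (pow_lt_1_zero q ltac:(rewrite Rabs_pos_eq; lra) e He) as [N HN].
exists N. intros k Hk. specialize (HN k Hk).
rewrite Rabs_pos_eq in HN by (apply pow_le; lra). exact HN.
Qed.

Lemma le_zero_of_geometric a C q : 0 <= q < 1 -> (forall k, a <= C * q ^ k) -> a <= 0.
Proof.
intros Hq Ha. apply (le_of_le_plus_small _ _ 1 1 ltac:(lra)). intros d [Hd _].
destruct (Rle_dec C 0) as [HC|HC].
- specialize (Ha O). simpl in Ha. lra.
- destruct (pow_eventually_small q (d / C) Hq ltac:(apply Rdiv_lt_0_compat; lra)) as [N HN].
  specialize (HN N (le_n N)). specialize (Ha N).
  assert (C * q ^ N < C * (d / C)) by (apply Rmult_lt_compat_l; lra).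
  replace (C * (d / C)) with d in * by (field; lra). lra.
Qed.

Section GeometricSteps.

Variables (n : nat) (x : nat -> vec n) (c q : R).
Hypotheses (Hc : 0 <= c) (Hq : 0 <= q < 1)
  (Hsteps : forall k, norm n (vsub n (x (S k)) (x k)) <= c * q ^ k).

Lemma geometric_partial_sum k m :
  norm n (vsub n (x (m + k)%nat) (x k)) <= c * (q ^ k - q ^ (m + k)) / (1 - q).
Proof.
induction m as [|m IHm]; simpl.
- rewrite norm_sub_self. replace (c * (q ^ k - q ^ k) / (1 - q)) with 0 by (field; lra). lra.
- pose proof (triangle n (x (S (m + k))) (x (m + k)%nat) (x k)).
  pose proof (Hsteps (m + k)%nat).
  replace (c * (q ^ k - q * q ^ (m + k)) / (1 - q))
    with (c * q ^ (m + k) + c * (q ^ k - q ^ (m + k)) / (1 - q)) by (field; lra).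
  lra.
Qed.

Lemma geometric_tail k m : (k <= m)%nat -> norm n (vsub n (x m) (x k)) <= c * q ^ k / (1 - q).
Proof.
intros Hkm. replace m with ((m - k) + k)%nat by lia.
eapply Rle_trans; [apply geometric_partial_sum|].
unfold Rdiv. apply Rmult_le_compat_r; [apply Rlt_le, Rinv_0_lt_compat; lra|].
pose proof (pow_le q (m - k + k) ltac:(lra)). nra.
Qed.

Lemma geometric_vcauchy : vcauchy n x.
Proof.
intros e He.
destruct (Rle_dec c 0) as [Hc0|Hc0].
- exists O. intros i j _ _.
  assert (Hi : forall a b, (a <= b)%nat -> norm n (vsub n (x b) (x a)) < e).
  { intros a b Hab. eapply Rle_lt_trans; [apply geometric_tail, Hab|].
    replace c with 0 by lra. unfold Rdiv. rewrite !Rmult_0_l. lra. }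
  destruct (le_lt_dec j i); [apply Hi; lia | rewrite norm_sub_sym; apply Hi; lia].
- destruct (pow_eventually_small q (e * (1 - q) / c) Hq) as [N HN].
  { apply Rdiv_lt_0_compat; nra. }
  exists N.
  assert (Hi : forall a b, (N <= a)%nat -> (a <= b)%nat -> norm n (vsub n (x b) (x a)) < e).
  { intros a b Ha Hab. eapply Rle_lt_trans; [apply geometric_tail, Hab|].
    specialize (HN a Ha).
    assert (c * q ^ a < c * (e * (1 - q) / c)) by (apply Rmult_lt_compat_l; lra).
    replace (c * (e * (1 - q) / c)) with (e * (1 - q)) in * by (field; lra).
    apply Rmult_lt_reg_r with (1 - q); [lra|]. unfold Rdiv.
    rewrite Rmult_assoc, Rinv_l by lra. lra. }
  intros i j Hi' Hj. destruct (le_lt_dec j i); [apply Hi; lia | rewrite norm_sub_sym; apply Hi; lia].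
Qed.

Lemma geometric_limit : exists xinf,
  Un_cv (fun k => norm n (vsub n (x k) xinf)) 0 /\
  forall k, norm n (vsub n (x k) xinf) <= c / (1 - q) * q ^ k.
Proof.
destruct (vcauchy_converges n x geometric_vcauchy) as [xinf Hlim].
exists xinf. split; [exact Hlim|]. intros k.
apply (le_of_le_plus_small _ _ 1 1 ltac:(lra)). intros e [He _].
destruct (Hlim e He) as [N HN].
specialize (HN (Nat.max N k) ltac:(lia)).
unfold Rdist in HN. rewrite Rminus_0_r, Rabs_pos_eq in HN by apply norm_nonneg.
pose proof (triangle n (x k) (x (Nat.max N k)) xinf).
pose proof (geometric_tail k (Nat.max N k) ltac:(lia)). rewrite norm_sub_sym in H0.
replace (c / (1 - q) * q ^ k) with (c * q ^ k / (1 - q)) by (field; lra). lra.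
Qed.

End GeometricSteps.

Lemma argmin_of_distS_zero n (X : vec n -> Prop) f xbar z :
  continuous_fun n f -> argmin_on n f X xbar -> X z ->
  distS n z (argmin_on n f X) = 0 -> argmin_on n f X z.
Proof.
intros Hfc Hxbar Hz Hd. split; [exact Hz|]. intros w Hw.
destruct Hxbar as [Hxbar Hmin].
cut (f z <= f xbar); [pose proof (Hmin w Hw); lra|].
apply (le_of_le_plus_small _ _ 1 1 ltac:(lra)). intros e [He _].
destruct (Hfc z e He) as [delta [Hdelta Hcont]].
destruct (distS_approx n z (argmin_on n f X) delta (ex_intro _ xbar (conj Hxbar Hmin)) Hdelta)
  as [y [[Hy Hymin] Hyz]].
assert (f y = f xbar) by (apply Rle_antisym; auto).
rewrite Hd, norm_sub_sym in Hyz. specialize (Hcont y ltac:(lra)).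
apply Rabs_def2 in Hcont. lra.
Qed.

Definition normalized_step n (X : vec n -> Prop) (alpha : R) (xk z xk1 : vec n) : Prop :=
  (z = vzero n -> xk1 = xk) /\
  (z <> vzero n -> is_proj n X (vsub n xk (vscale n (alpha / norm n z) z)) xk1).

Lemma sq_le_of_le_plus d D dl : 0 <= d <= D -> D <= d + dl -> 0 <= dl <= 1 ->
  D ^ 2 <= d ^ 2 + dl * (2 * d + 1).
Proof.
intros Hd HD Hdl.
assert (D ^ 2 <= (d + dl) ^ 2) by (apply pow_incr; lra).
nra.
Qed.

Section SubgradientStep.

Variables (n : nat) (X : vec n -> Prop) (f : vec n -> R) (xbar : vec n) (eps mu rho L : R).
Hypotheses (HXcv : convex n X) (Hxbar : argmin_on n f X xbar) (Hrho : 0 < rho).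
Hypothesis Hwc : forall x y zeta, X x -> ball n xbar eps x -> X y -> ball n xbar eps y ->
  frechet_subdiff n f x zeta ->
  f y >= f x + inner n zeta (vsub n y x) - rho / 2 * (norm n (vsub n y x)) ^ 2.
Hypothesis Hsharp : forall x, X x -> ball n xbar eps x ->
  f x - f xbar >= mu * distS n x (argmin_on n f X).
Hypothesis Hsubgrad_bound : forall z w, X z -> ball n xbar eps z ->
  frechet_subdiff n f z w -> norm n w <= L.

Local Notation Xstar := (argmin_on n f X).

Lemma solutions_nonempty : exists y, Xstar y.
Proof. exists xbar. exact Hxbar. Qed.

(* Weak convexity plus sharpness, tested against a near-nearest solution y:
   <zeta, x - y> >= mu dist(x, Xstar) - rho/2 |x - y|^2. *)
Lemma near_solution_inner x zeta dl :
  X x -> ball n xbar (3 * eps / 4) x -> frechet_subdiff n f x zeta ->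
  0 < dl -> distS n x Xstar + dl <= eps / 4 ->
  exists y, Xstar y /\ X y /\
    distS n x Xstar <= norm n (vsub n x y) <= distS n x Xstar + dl /\
    inner n zeta (vsub n x y) >= mu * distS n x Xstar - rho / 2 * norm n (vsub n x y) ^ 2.
Proof.
intros Hx Hball Hsub Hdl Hsmall. unfold ball in Hball.
destruct (distS_approx n x Xstar dl solutions_nonempty Hdl) as [y [Hy Hxy]].
pose proof (distS_le n x Xstar y Hy). pose proof (distS_nonneg n x Xstar solutions_nonempty).
pose proof Hy as [HXy Hymin]. pose proof Hxbar as [HXbar Hbmin].
assert (Hfy : f y = f xbar) by (apply Rle_antisym; auto).
assert (Hbally : ball n xbar eps y).
{ unfold ball. pose proof (triangle n y x xbar). rewrite (norm_sub_sym n y x) in *. lra. }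
assert (Hballx : ball n xbar eps x) by (unfold ball; lra).
exists y. repeat split; auto; try lra.
pose proof (Hwc x y zeta Hx Hballx HXy Hbally Hsub).
pose proof (Hsharp x Hx Hballx).
rewrite inner_sub_swap, (norm_sub_sym n x y). lra.
Qed.

Lemma stationary_near_solution x :
  X x -> ball n xbar (3 * eps / 4) x -> distS n x Xstar < eps / 4 ->
  rho * distS n x Xstar < 2 * mu -> frechet_subdiff n f x (vzero n) -> distS n x Xstar = 0.
Proof.
intros Hx Hball Hsmall Hrd Hsub.
pose proof (distS_nonneg n x Xstar solutions_nonempty) as Hd.
set (d := distS n x Xstar) in *.
assert (Hslope : mu * d - rho / 2 * d ^ 2 <= 0).
{ apply (le_of_le_plus_small _ 0 (rho / 2 * (2 * d + 1)) (Rmin 1 (eps / 4 - d))).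
  { apply Rmin_glb_lt; lra. }
  intros dl [Hdl Hdl0]. pose proof (Rmin_l 1 (eps / 4 - d)). pose proof (Rmin_r 1 (eps / 4 - d)).
  destruct (near_solution_inner x (vzero n) dl Hx Hball Hsub Hdl ltac:(fold d; lra))
    as [y [_ [_ [[HD1 HD2] Hin]]]].
  rewrite inner_vzero_l in Hin. fold d in HD1, HD2, Hin.
  set (D := norm n (vsub n x y)) in *.
  pose proof (sq_le_of_le_plus d D dl ltac:(split; lra) HD2 ltac:(split; lra)).
  assert (rho / 2 * D ^ 2 <= rho / 2 * (d ^ 2 + dl * (2 * d + 1))) by (apply Rmult_le_compat_l; lra).
  lra. }
destruct (Rle_lt_dec d 0) as [|Hpos]; [lra|].
assert (0 < d * (mu - rho * d / 2)) by (apply Rmult_lt_0_compat; lra). nra.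
Qed.

Lemma projected_step_distS x zeta s p :
  X x -> ball n xbar (3 * eps / 4) x -> distS n x Xstar < eps / 4 ->
  frechet_subdiff n f x zeta -> 0 <= s -> is_proj n X (vsub n x (vscale n s zeta)) p ->
  distS n p Xstar ^ 2 <=
    distS n x Xstar ^ 2 - 2 * s * (mu * distS n x Xstar - rho / 2 * distS n x Xstar ^ 2)
    + s ^ 2 * norm n zeta ^ 2.
Proof.
intros Hx Hball Hsmall Hsub Hs Hproj.
pose proof (distS_nonneg n x Xstar solutions_nonempty) as Hd.
set (d := distS n x Xstar) in *.
apply (le_of_le_plus_small _ _ ((2 * d + 1) * (1 + s * rho)) (Rmin 1 (eps / 4 - d))).
{ apply Rmin_glb_lt; lra. }
intros dl [Hdl Hdl0]. pose proof (Rmin_l 1 (eps / 4 - d)). pose proof (Rmin_r 1 (eps / 4 - d)).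
destruct (near_solution_inner x zeta dl Hx Hball Hsub Hdl ltac:(fold d; lra))
  as [y [Hy [HXy [[HD1 HD2] Hin]]]].
fold d in HD1, HD2, Hin.
pose proof (proj_nonexpansive n X _ p y HXcv Hproj HXy) as Hcontr.
rewrite sqdist_step, <- !norm_sq in Hcontr.
pose proof (distS_le n p Xstar y Hy). pose proof (distS_nonneg n p Xstar solutions_nonempty).
set (D := norm n (vsub n x y)) in *.
pose proof (sq_le_of_le_plus d D dl ltac:(split; lra) HD2 ltac:(split; lra)) as HD.
assert (Hs_in : s * inner n zeta (vsub n x y) >= s * (mu * d - rho / 2 * D ^ 2))
  by (apply Rle_ge, Rmult_le_compat_l; lra).
assert (Hsrho : 0 <= s * rho) by nra.
assert (D ^ 2 * (1 + s * rho) <= (d ^ 2 + dl * (2 * d + 1)) * (1 + s * rho))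
  by (apply Rmult_le_compat_r; lra).
assert (distS n p Xstar ^ 2 <= norm n (vsub n p y) ^ 2)
  by (pose proof (norm_nonneg n (vsub n p y)); nra).
nra.
Qed.

Lemma normalized_step_progress x zeta alpha x' :
  X x -> ball n xbar (3 * eps / 4) x -> distS n x Xstar < eps / 4 ->
  rho * distS n x Xstar < 2 * mu -> frechet_subdiff n f x zeta -> 0 <= alpha ->
  normalized_step n X alpha x zeta x' ->
  X x' /\ norm n (vsub n x' x) <= alpha /\
  distS n x' Xstar ^ 2 <=
    distS n x Xstar ^ 2 - 2 * (alpha / L) * (mu * distS n x Xstar - rho / 2 * distS n x Xstar ^ 2)
    + alpha ^ 2.
Proof.
intros Hx Hball Hsmall Hrd Hsub Halpha [Hzero Hnonzero].
pose proof (distS_nonneg n x Xstar solutions_nonempty) as Hd.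
set (d := distS n x Xstar) in *.
assert (Hslope : 0 <= mu * d - rho / 2 * d ^ 2).
{ assert (0 <= d * (mu - rho * d / 2)) by (apply Rmult_le_pos; lra). nra. }
destruct (classic (zeta = vzero n)) as [Hz|Hz].
- subst zeta. rewrite (Hzero eq_refl), norm_sub_self. fold d.
  pose proof (stationary_near_solution x Hx Hball Hsmall Hrd Hsub) as Hd0. fold d in Hd0.
  rewrite Hd0 in *. repeat split; auto. nra.
- specialize (Hnonzero Hz).
  pose proof (norm_pos n zeta Hz) as Hnz.
  assert (HzL : norm n zeta <= L) by (apply (Hsubgrad_bound x); auto; unfold ball in *; lra).
  assert (Hs : 0 <= alpha / norm n zeta) by (apply Rmult_le_pos; [lra | apply Rlt_le, Rinv_0_lt_compat; lra]).
  split; [now destruct Hnonzero|]. split.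
  + pose proof (projected_step_length n X x zeta _ x' HXcv Hx Hs Hnonzero).
    replace (alpha / norm n zeta * norm n zeta) with alpha in * by (field; lra). lra.
  + pose proof (projected_step_distS x zeta _ x' Hx Hball Hsmall Hsub Hs Hnonzero) as Hstep.
    fold d in Hstep.
    replace ((alpha / norm n zeta) ^ 2 * norm n zeta ^ 2) with (alpha ^ 2) in Hstep
      by (field; lra).
    (* the step 2 s (mu d - rho/2 d^2) only shrinks when s = alpha/|zeta| is replaced by alpha/L *)
    assert (alpha / L <= alpha / norm n zeta).
    { unfold Rdiv. apply Rmult_le_compat_l; [lra|]. apply Rinv_le_contravar; lra. }
    assert (alpha / L * (mu * d - rho / 2 * d ^ 2) <= alpha / norm n zeta * (mu * d - rho / 2 * d ^ 2))
      by (apply Rmult_le_compat_r; lra).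
    lra.
Qed.

End SubgradientStep.

(* The scalar recursion behind the linear rate: with step alpha = R0 tau r and
   d <= R0 r, the bound of normalized_step_progress is at most (R0 r)^2 q^2,
   where q^2 = 1 - (1 - gamma) tau^2. *)
Lemma contraction_arith L mu rho gamma tau R0 r d :
  0 < L -> 0 < R0 -> mu = tau * L -> rho * R0 = gamma * mu ->
  0 <= gamma <= 1 -> 0 <= tau -> 2 * tau ^ 2 <= 1 -> 0 <= r <= 1 -> 0 <= d <= R0 * r ->
  d ^ 2 - 2 * (R0 * tau * r / L) * (mu * d - rho / 2 * d ^ 2) + (R0 * tau * r) ^ 2
    <= (R0 * r) ^ 2 * (1 - (1 - gamma) * tau ^ 2).
Proof.
intros HL HR0 Hmu HR0rho Hg Ht Ht2 Hr Hd.
assert (Hrho : rho = gamma * tau * L / R0).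
{ replace rho with (rho * R0 / R0) by (field; lra). now rewrite HR0rho, Hmu, Rmult_assoc. }
assert (Hdecr : 2 * (R0 * tau * r / L) * (mu * d - rho / 2 * d ^ 2)
                = 2 * R0 * tau ^ 2 * r * d - gamma * tau ^ 2 * r * d ^ 2)
  by (rewrite Hrho, Hmu; field; lra).
rewrite Hdecr.
set (u := R0 * r).
assert (Hrd : gamma * tau ^ 2 * r * d ^ 2 <= gamma * tau ^ 2 * d ^ 2).
{ assert (0 <= gamma * tau ^ 2 * d ^ 2) by (repeat apply Rmult_le_pos; try apply pow2_ge_0; lra).
  nra. }
assert (Hfactor : 0 <= (u - d) * ((1 + gamma * tau ^ 2) * (u + d) - 2 * tau ^ 2 * u)).
{ apply Rmult_le_pos; [unfold u in *; lra|].
  assert (0 <= gamma * tau ^ 2) by (apply Rmult_le_pos; [lra | apply pow2_ge_0]).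
  unfold u in *. nra. }
unfold u in *. nra.
Qed.

Section RateAnalysis.

Variables (n : nat) (X : vec n -> Prop) (f : vec n -> R) (xbar : vec n) (eps mu rho L : R).
Hypotheses (HXcl : closed n X) (HXcv : convex n X) (Hfc : continuous_fun n f)
  (Hxbar : argmin_on n f X xbar) (Heps : 0 < eps) (Hmu : 0 < mu) (Hrho : 0 < rho) (HLpos : 0 < L).
Hypothesis Hwc : forall x y zeta, X x -> ball n xbar eps x -> X y -> ball n xbar eps y ->
  frechet_subdiff n f x zeta ->
  f y >= f x + inner n zeta (vsub n y x) - rho / 2 * (norm n (vsub n y x)) ^ 2.
Hypothesis Hsharp : forall x, X x -> ball n xbar eps x ->
  f x - f xbar >= mu * distS n x (argmin_on n f X).
Hypothesis Hsubgrad_bound : forall z w, X z -> ball n xbar eps z ->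
  frechet_subdiff n f z w -> norm n w <= L.

Variables (gamma tau R0 lam q : R).
Hypotheses (Hgamma : 0 < gamma < 1) (Htau : 0 < tau) (Htau2 : 2 * tau ^ 2 <= 1)
  (Hmu_tau : mu = tau * L) (HR0_rho : rho * R0 = gamma * mu)
  (HR0_eps : R0 = eps * (1 - gamma) * tau / 4) (Hlam : lam = R0 * tau)
  (Hq0 : 0 <= q) (Hq2 : q ^ 2 = 1 - (1 - gamma) * tau ^ 2).

Variables (x0 : vec n) (x zeta : nat -> vec n).
Hypotheses (Hx0X : X x0) (Hx0B : ball n xbar (eps / 4) x0)
  (Hx0d : distS n x0 (argmin_on n f X) <= R0) (Hx0 : x O = x0)
  (Hrun : gd_subgrad_run n f X lam q x zeta).

Local Notation Xstar := (argmin_on n f X).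

Lemma R0_pos : 0 < R0.
Proof. rewrite HR0_eps. apply Rmult_lt_0_compat; [|lra]. repeat apply Rmult_lt_0_compat; lra. Qed.

Lemma R0_lt_quarter : R0 < eps / 4.
Proof.
assert ((1 - gamma) * tau < 1) by nra.
rewrite HR0_eps. assert (eps * ((1 - gamma) * tau) < eps) by nra. lra.
Qed.

Lemma q_lt_1 : q < 1.
Proof.
assert (0 < (1 - gamma) * tau ^ 2) by (apply Rmult_lt_0_compat; [lra | apply pow_lt; lra]).
destruct (Rlt_dec q 1) as [|Hn]; [assumption|]. nra.
Qed.

Lemma q_pow_bounds k : 0 <= q ^ k <= 1.
Proof.
pose proof q_lt_1. induction k as [|k IHk]; simpl; [lra|].
split; [apply Rmult_le_pos|]; nra.
Qed.

(* The total path length lam / (1 - q) is at most eps/2,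
   because q = sqrt(1 - a) <= 1 - a/2 with a = (1 - gamma) tau^2 = 4 lam / eps. *)
Lemma path_length_le : lam / (1 - q) <= eps / 2.
Proof.
pose proof q_lt_1.
set (a := (1 - gamma) * tau ^ 2) in *.
assert (Hlam_a : lam = eps * a / 4) by (unfold a; rewrite Hlam, HR0_eps; field).
assert (Ha : 0 <= a <= 1 / 2) by (unfold a; pose proof (pow2_ge_0 tau); nra).
assert (Hq : q <= 1 - a / 2) by nra.
apply Rmult_le_reg_r with (1 - q); [lra|].
unfold Rdiv at 1. rewrite Rmult_assoc, Rinv_l, Rmult_1_r by lra.
rewrite Hlam_a. nra.
Qed.

Definition on_track (k : nat) : Prop :=
  X (x k) /\ norm n (vsub n (x k) x0) <= lam * (1 - q ^ k) / (1 - q) /\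
  distS n (x k) Xstar <= R0 * q ^ k.

(* On track, the iterate is within 3eps/4 of xbar (eps/4 start + eps/2 path). *)
Lemma on_track_ball k : on_track k -> ball n xbar (3 * eps / 4) (x k).
Proof.
intros [_ [Htravel _]]. pose proof q_lt_1. pose proof (q_pow_bounds k).
pose proof path_length_le.
assert (lam * (1 - q ^ k) / (1 - q) <= lam / (1 - q)).
{ unfold Rdiv. apply Rmult_le_compat_r; [apply Rlt_le, Rinv_0_lt_compat; lra|].
  rewrite Hlam. pose proof R0_pos.
  assert (0 <= R0 * tau * q ^ k) by (repeat apply Rmult_le_pos; lra). lra. }
unfold ball in *. pose proof (triangle n (x k) x0 xbar). lra.
Qed.

Lemma on_track_step k :
  on_track k -> norm n (vsub n (x (S k)) (x k)) <= lam * q ^ k /\ on_track (S k).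
Proof.
intros Htrack. pose proof (on_track_ball k Htrack) as Hball.
destruct Htrack as [HXk [Htravel Hdist]].
pose proof q_lt_1. pose proof (q_pow_bounds k). pose proof R0_pos. pose proof R0_lt_quarter.
pose proof (distS_nonneg n (x k) Xstar (ex_intro _ xbar Hxbar)).
destruct (Hrun k) as [Hsub Hupdate].
assert (Hlam_pos : 0 <= lam * q ^ k) by (rewrite Hlam; repeat apply Rmult_le_pos; lra).
assert (HrhoR0 : rho * distS n (x k) Xstar < 2 * mu).
{ assert (rho * distS n (x k) Xstar <= rho * R0) by (apply Rmult_le_compat_l; nra). nra. }
destruct (normalized_step_progress n X f xbar eps mu rho L HXcv Hxbar Hrho
            Hwc Hsharp Hsubgrad_bound (x k) (zeta k) (lam * q ^ k) (x (S k))
            HXk Hball ltac:(nra) HrhoR0 Hsub Hlam_pos Hupdate) as [HX' [Hmove Hdist']].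
split; [exact Hmove|]. split; [exact HX'|]. split.
- pose proof (triangle n (x (S k)) (x k) x0).
  replace (lam * (1 - q ^ S k) / (1 - q)) with (lam * q ^ k + lam * (1 - q ^ k) / (1 - q))
    by (simpl; field; lra).
  lra.
- rewrite Hlam in Hdist'.
  pose proof (contraction_arith L mu rho gamma tau R0 (q ^ k) (distS n (x k) Xstar)
                HLpos R0_pos Hmu_tau HR0_rho ltac:(lra) ltac:(lra) Htau2 (q_pow_bounds k)
                ltac:(split; lra)) as Hcontr.
  rewrite <- Hq2 in Hcontr.
  assert (Hsq : distS n (x (S k)) Xstar ^ 2 <= (R0 * q ^ S k) ^ 2) by (simpl; nra).
  assert (0 <= R0 * q ^ S k) by (pose proof (q_pow_bounds (S k)); nra).
  nra.
Qed.

Lemma on_track_always k : on_track k.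
Proof.
induction k as [|k IHk]; [|exact (proj2 (on_track_step k IHk))].
unfold on_track. rewrite Hx0, norm_sub_self. simpl.
replace (lam * (1 - 1) / (1 - q)) with 0 by (field; pose proof q_lt_1; lra).
repeat split; auto; lra.
Qed.

Lemma linear_convergence :
  (forall k, ball n xbar eps (x k)) /\
  (forall k, distS n (x k) Xstar <= R0 * q ^ k) /\
  (exists xinf, Xstar xinf /\ Un_cv (fun k => norm n (vsub n (x k) xinf)) 0 /\
     forall k, norm n (vsub n (x k) xinf) <= lam / (1 - q) * q ^ k).
Proof.
pose proof q_lt_1. pose proof R0_pos.
assert (Hlam_pos : 0 <= lam) by (rewrite Hlam; nra).
destruct (geometric_limit n x lam q Hlam_pos ltac:(split; lra)
            (fun k => proj1 (on_track_step k (on_track_always k)))) as [xinf [Hlim Hrate]].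
split; [|split].
- intros k. pose proof (on_track_ball k (on_track_always k)). unfold ball in *. lra.
- intros k. apply (on_track_always k).
- exists xinf. split; [|split; assumption].
  assert (HXinf : X xinf) by (apply (HXcl x xinf); [intros k; apply (on_track_always k) | exact Hlim]).
  apply (argmin_of_distS_zero n X f xbar xinf Hfc Hxbar HXinf).
  apply Rle_antisym; [|apply (distS_nonneg n xinf Xstar (ex_intro _ xbar Hxbar))].
  (* dist(xinf, Xstar) <= |xinf - x_k| + dist(x_k, Xstar) <= (lam / (1 - q) + R0) q^k *)
  apply (le_zero_of_geometric _ (lam / (1 - q) + R0) q ltac:(split; lra)). intros k.
  pose proof (distS_lipschitz n xinf (x k) Xstar (ex_intro _ xbar Hxbar)) as Hlip.
  rewrite norm_sub_sym in Hlip. pose proof (Hrate k).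
  destruct (on_track_always k) as [_ [_ Hdist]]. lra.
Qed.

End RateAnalysis.

(* The paper's choice gamma = eps rho / (4L + eps rho), tau = mu/L satisfies the
   calibration of RateAnalysis; in particular gamma mu / rho = eps (1 - gamma) tau / 4. *)
Lemma paper_parameters eps mu rho L :
  0 < eps -> 0 < mu -> 0 < rho -> 0 < L -> mu / L <= 1 / sqrt 2 ->
  let gamma := eps * rho / (4 * L + eps * rho) in
  0 < gamma < 1 /\ 0 < mu / L /\ 2 * (mu / L) ^ 2 <= 1 /\
  gamma * mu / rho = eps * (1 - gamma) * (mu / L) / 4.
Proof.
intros Heps Hmu Hrho HL Htau gamma.
assert (Hden : 0 < 4 * L + eps * rho) by nra.
assert (Htau0 : 0 < mu / L) by (apply Rdiv_lt_0_compat; lra).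
repeat split.
- apply Rdiv_lt_0_compat; nra.
- apply (Rmult_lt_reg_r (4 * L + eps * rho)); [lra|]. unfold gamma, Rdiv.
  rewrite Rmult_assoc, Rinv_l by lra. lra.
- exact Htau0.
-
  pose proof (sqrt_lt_R0 2 ltac:(lra)). pose proof (sqrt_sqrt 2 ltac:(lra)).
  assert (mu / L * sqrt 2 <= 1).
  { replace 1 with (1 / sqrt 2 * sqrt 2) by (field; lra). apply Rmult_le_compat_r; lra. }
  nra.
- unfold gamma. field. lra.
Qed.

Theorem theorem5p6 (n : nat) (X : vec n -> Prop) (f : vec n -> R)
  (xbar : vec n) (eps mu rho L : R)
  (* Local Regularity Assumption *)
  (HXne : exists x, X x) (HXcl : closed n X) (HXcv : convex n X)
  (Hfc : continuous_fun n f)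
  (Hxbar : argmin_on n f X xbar)
  (Heps : 0 < eps) (Hmu : 0 < mu) (Hrho : 0 < rho)
  (Hwc : forall x y zeta, X x -> ball n xbar eps x -> X y -> ball n xbar eps y ->
     frechet_subdiff n f x zeta ->
     f y >= f x + inner n zeta (vsub n y x) - rho / 2 * (norm n (vsub n y x)) ^ 2)
  (Hsharp : forall x, X x -> ball n xbar eps x ->
     f x - f xbar >= mu * distS n x (argmin_on n f X))
  (* L = sup of subgradient norms, finite and positive *)
  (HL : is_lub (fun r => exists x zeta, X x /\ ball n xbar eps x /\
                  frechet_subdiff n f x zeta /\ r = norm n zeta) L)
  (HLpos : 0 < L)
  (Htau : mu / L <= 1 / sqrt 2)
  (x0 : vec n) (Hx0X : X x0) (Hx0B : ball n xbar (eps / 4) x0)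
  (Hx0d : distS n x0 (argmin_on n f X) <=
          (eps * rho / (4 * L + eps * rho)) * mu / rho)
  (x zeta : nat -> vec n) (Hx0 : x O = x0)
  (Hrun : gd_subgrad_run n f X
            ((eps * rho / (4 * L + eps * rho)) * mu ^ 2 / (rho * L))
            (sqrt (1 - (1 - eps * rho / (4 * L + eps * rho)) * (mu / L) ^ 2))
            x zeta) :
  let gamma := eps * rho / (4 * L + eps * rho) in
  let tau := mu / L in
  let lam := gamma * mu ^ 2 / (rho * L) in
  let q := sqrt (1 - (1 - gamma) * tau ^ 2) in
  (forall k, ball n xbar eps (x k)) /\
  (forall k, (distS n (x k) (argmin_on n f X)) ^ 2 <=
             gamma ^ 2 * mu ^ 2 / rho ^ 2 * (1 - (1 - gamma) * tau ^ 2) ^ k) /\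
  (exists xinf, argmin_on n f X xinf /\
     Un_cv (fun k => norm n (vsub n (x k) xinf)) 0 /\
     forall k, norm n (vsub n (x k) xinf) <= lam / (1 - q) * q ^ k).
Proof.
intros gamma tau lam q.
destruct (paper_parameters eps mu rho L Heps Hmu Hrho HLpos Htau)
  as [Hgamma [Htau0 [Htau2 HR0_eps]]].
fold gamma tau in Hgamma, Htau0, Htau2, HR0_eps.
assert (Hsubgrad_bound : forall z w, X z -> ball n xbar eps z ->
          frechet_subdiff n f z w -> norm n w <= L)
  by (intros z w Hz Hball Hw; apply (proj1 HL); exists z, w; auto).
set (R0 := gamma * mu / rho).
assert (Hq2 : q ^ 2 = 1 - (1 - gamma) * tau ^ 2).
{ unfold q. rewrite <- Rsqr_pow2. apply Rsqr_sqrt.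
  assert (0 <= gamma * tau ^ 2) by (apply Rmult_le_pos; [lra | apply pow2_ge_0]).
  lra. }
destruct (linear_convergence n X f xbar eps mu rho L HXcl HXcv Hfc Hxbar Heps Hmu Hrho HLpos
            Hwc Hsharp Hsubgrad_bound gamma tau R0 lam q Hgamma Htau0 Htau2
            ltac:(unfold tau; field; lra) ltac:(unfold R0; field; lra) HR0_eps
            ltac:(unfold lam, R0, tau; field; lra) (sqrt_pos _) Hq2
            x0 x zeta Hx0X Hx0B Hx0d Hx0 Hrun) as [Hball [Hdist Hlimit]].
split; [exact Hball | split; [|exact Hlimit]].
intros k.
replace (gamma ^ 2 * mu ^ 2 / rho ^ 2 * (1 - (1 - gamma) * tau ^ 2) ^ k) with ((R0 * q ^ k) ^ 2)
  by (rewrite <- Hq2, <- pow_mult, Nat.mul_comm, pow_mult; unfold R0; field; lra).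
pose proof (distS_nonneg n (x k) (argmin_on n f X) (ex_intro _ xbar Hxbar)) as Hd0. specialize (Hdist k).
apply pow_incr. lra.
Qed.
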